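(* Let $n\geq 4$, let $S$ be the set of all $3$-cycles in $S_n$, and let $CAG_n=\mathrm{Cay}(A_n,S)$. Then the map $h:\alpha\mapsto\alpha^{-1}$ ($\alpha\in A_n$) is an automorphism of the graph $CAG_n$. In particular, $CAG_n$ is not a normal Cayley graph, i.e. $R(A_n)$ is not a normal subgroup of $\mathrm{Aut}(CAG_n)$.
   Context: For a finite group $\Gamma$ and a subset $T\subseteq\Gamma$ with $e\notin T$ and $T=T^{-1}$, the Cayley graph $\mathrm{Cay}(\Gamma,T)$ is the undirected graph with vertex set $\Gamma$ and edge set $\{\{\gamma,t\gamma\}\mid \gamma\in\Gamma, t\in T\}$. The right regular representation $R(\Gamma)=\{r_\gamma: x\mapsto x\gamma\mid\gamma\in\Gamma\}$ is a subgroup of $\mathrm{Aut}(\mathrm{Cay}(\Gamma,T))$; the Cayley graph is called normal if $R(\Gamma)$ is a normal subgroup of $\mathrm{Aut}(\mathrm{Cay}(\Gamma,T))$. *)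

From HB Require Import structures.
From mathcomp Require Import all_boot all_order all_fingroup all_solvable.
Set Implicit Arguments. Unset Strict Implicit. Unset Printing Implicit Defensive.
Import GroupScope.

Definition is_3cycle (n : nat) (s : {perm 'I_n}) : bool :=
  [exists a : 'I_n, exists b : 'I_n, exists c : 'I_n,
    [&& a != b, b != c, a != c,
        (s a == b) && (s b == c) && (s c == a) &
        [forall x, [&& x != a, x != b & x != c] ==> (s x == x)]]].

(* Cayley graph Cay(G,T): vertex set G, x ~ y iff y = t x for some t in T,
   i.e. y * x^-1 \in T. *)
Definition cay_adj (gT : finGroupType) (T : {set gT}) : rel gT :=
  fun x y => y * x^-1 \in T.

Definition graph_aut (V : finType) (e : rel V) : {set {perm V}} :=
  [set f : {perm V} | [forall x, forall y, e (f x) (f y) == e x y]].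

Definition rtrans (gT : finGroupType) (g : gT) : {perm gT} :=
  perm (mulIg g).
Definition rreg (gT : finGroupType) : {set {perm gT}} :=
  [set rtrans g | g : gT].

Definition invperm (gT : finGroupType) : {perm gT} := perm (@invg_inj gT).

From mathcomp Require Import all_boot all_order all_fingroup all_solvable.
Import GroupScope.

(** Since the connection set [S] of 3-cycles is closed under
    inversion and conjugation, [y x^-1 \in S] iff [y^-1 x \in S], so inversion
    preserves adjacency.  On the other hand, conjugating a right translation
    [x |-> x g] by inversion gives the left translation [x |-> g^-1 x]; this is
    a right translation only if [g] is central.  So if [R(A_n)] were normal in
    the automorphism group, which contains inversion, [A_n] would be abelian,
    which it is not for [n >= 4]. *)

Section CayleyInversion.

Variable gT : finGroupType.

Lemma invperm_cay_adj (T : {set gT}) :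
    (forall t, t \in T -> t^-1 \in T) ->
    (forall t x, t \in T -> t ^ x \in T) ->
  invperm gT \in graph_aut (cay_adj T).
Proof.
move=> invT conjT; rewrite inE; apply/forallP=> x; apply/forallP=> y.
rewrite /cay_adj /invperm !permE invgK; apply/eqP; apply/idP/idP => adjT.
- have -> : y * x^-1 = ((y^-1 * x)^-1) ^ x^-1.
    by rewrite conjgE invgK invMg invgK !mulgA mulgV mul1g.
  exact/conjT/invT.
- have -> : y^-1 * x = ((y * x^-1)^-1) ^ x.
    by rewrite conjgE invMg invgK !mulgA mulVg mul1g.
  exact/conjT/invT.
Qed.

Lemma rtrans_conj_invperm (g x : gT) : (rtrans g ^ invperm gT) x = g^-1 * x.
Proof.
have invpermV y : (invperm gT)^-1 y = y^-1.
  by apply: (canLR (permK _)); rewrite permE invgK.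
by rewrite conjgE !permM invpermV !permE invMg invgK.
Qed.

Lemma invperm_norm_rreg_commute :
  invperm gT \in 'N(rreg gT) -> forall x y : gT, commute x y.
Proof.
move=> normR x y.
have : rtrans x^-1 ^ invperm gT \in rreg gT by rewrite memJ_norm ?imset_f.
case/imsetP=> k _ def_k.
have ltrans_x z : x * z = z * k.
  by rewrite -[x]invgK -rtrans_conj_invperm def_k permE.
have k_x : k = x by have := ltrans_x 1; rewrite mulg1 mul1g.
by rewrite /commute ltrans_x k_x.
Qed.

End CayleyInversion.

Lemma subg_commute_abelian (gT : finGroupType) (G : {group gT}) :
  (forall u v : subg_of G, commute u v) -> abelian G.
Proof.
move=> commG; apply/centsP=> x Gx y Gy.
have := congr1 sgval (commG (subg G x) (subg G y)).
by rewrite !sgvalM ?inE // -!/(val _) !subgK.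
Qed.

Lemma Alt_nonabelian n : 3 < n -> ~~ abelian ('Alt_('I_n)).
Proof.
move=> n_gt3; pose i k (lt_k3 : k < 4) : 'I_n := Ordinal (leq_trans lt_k3 n_gt3).
pose a := i 0%N isT; pose b := i 1%N isT; pose c := i 2%N isT; pose d := i 3%N isT.
pose g := tperm a b * tperm a c; pose h := tperm a b * tperm c d.
have gA : g \in 'Alt_('I_n) by rewrite Alt_even odd_permM !odd_tperm.
have hA : h \in 'Alt_('I_n) by rewrite Alt_even odd_permM !odd_tperm.
apply/negP => /centsP/(_ g gA h hA) /(congr1 (fun p : {perm 'I_n} => p a)).
by rewrite !permM !permE.
Qed.

Section ThreeCycles.

Variable n : nat.
Implicit Types s g : {perm 'I_n}.

Lemma is_3cycleV s : is_3cycle s -> is_3cycle s^-1.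
Proof.
case/existsP=> a /existsP[b /existsP[c /and5P[ab bc ac sabc /forallP fixs]]].
case/andP: sabc => /andP[/eqP sa /eqP sb] /eqP sc.
apply/existsP; exists a; apply/existsP; exists c; apply/existsP; exists b.
have [sVa sVc sVb] : [/\ s^-1 a = c, s^-1 c = b & s^-1 b = a].
  by split; apply: (canLR (permK s)).
rewrite ac (eq_sym c b) bc ab sVa sVc sVb !eqxx /=.
apply/forallP=> x; apply/implyP=> /and3P[xa xc xb].
have /eqP {1}<- := implyP (fixs x) (introT and3P (And3 xa xb xc)).
by rewrite permK.
Qed.

Lemma is_3cycleJ s g : is_3cycle s -> is_3cycle (s ^ g).
Proof.
case/existsP=> a /existsP[b /existsP[c /and5P[ab bc ac sabc /forallP fixs]]].
case/andP: sabc => /andP[/eqP sa /eqP sb] /eqP sc.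
apply/existsP; exists (g a); apply/existsP; exists (g b); apply/existsP; exists (g c).
rewrite !(inj_eq perm_inj) ab bc ac /= conjgE !permM !permK sa sb sc !eqxx /=.
apply/forallP=> x; rewrite -[x](permKV g) !(inj_eq perm_inj); apply/implyP=> hx.
by rewrite !permM permK (eqP (implyP (fixs _) hx)).
Qed.

End ThreeCycles.

Theorem theorem2p1 (n : nat) (hn : 4 <= n) :
  let V := subg_of ('Alt_('I_n)) in
  let S : {set V} := [set u : V | is_3cycle (sgval u)] in
  invperm V \in graph_aut (cay_adj S) /\
  ~ (rreg V <| graph_aut (cay_adj S)).
Proof.
move=> V S.
have autS : invperm V \in graph_aut (cay_adj S).
  apply: invperm_cay_adj => [t | t x]; rewrite !inE.
  - exact: (@is_3cycleV n (sgval t)).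
  - exact: (@is_3cycleJ n (sgval t) (sgval x)).
split=> // /andP[_ /subsetP/(_ _ autS)/invperm_norm_rreg_commute commV].
by have := Alt_nonabelian n hn; rewrite subg_commute_abelian.
Qed.
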